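(* Let $H$ be a binary tree based graph and let ${\bf SAT}(H)$ be the set of satisfying assignments of $\phi_H$. Then $\sum_{S\in{\bf SAT}(H)} (1/2)^{|S\setminus Fix(S)|}=1$.
   Context: Sets of literals never contain a variable together with its negation; $Vars(S)$ is the set of variables occurring in $S$. A rooted tree is extended if none of its leaves has a sibling. A graph $H$ is a binary tree based graph if it is the edge-disjoint union of extended rooted trees $T_1,\dots,T_m$ with roots $t_1,\dots,t_m$ such that every leaf of some $T_i$ is a leaf of exactly two of the trees, and any two trees have at most one common vertex, which is a leaf of both. $T_i,T_j$ are adjacent if they share a leaf $\ell_{i,j}$; $P_{i,j}$ is the path between $t_i$ and $t_j$ in $T_i\cup T_j$. A pseudoedge is a pair $\{t_i,t_j\}$ with $T_i,T_j$ adjacent. $\phi_H$ is the CNF on variables $V(H)$ with a clause $C_{i,j}$ whose literals are the positive literals of $V(P_{i,j})$, for each pseudoedge $\{t_i,t_j\}$. ${\bf SAT}(H)$ is the set of sets $S$ of literals with $Vars(S)=V(H)$ satisfying every clause. For a set $S$ of literals, the positive literal $\ell_{i,j}$ is fixed w.r.t. $S$ if $\ell_{i,j}\in S$ and all other variables of $C_{i,j}$ occur negatively in $S$; $Fix(S)$ is the set of fixed literals. *)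

From HB Require Import structures.
From mathcomp Require Import all_boot all_algebra.
From mathcomp Require Import boolp.

Set Implicit Arguments.
Unset Strict Implicit.
Unset Printing Implicit Defensive.

Import GRing.Theory Num.Theory.

Definition adjE (V : finType) (E : {set {set V}}) : rel V :=
  fun a b => (a != b) && ([set a; b] \in E).

Definition tpath (V : finType) (E : {set {set V}}) (x y : V) (p : seq V) : Prop :=
  path (adjE E) x p /\ uniq (x :: p) /\ last x p = y.

Definition on_path (V : finType) (E : {set {set V}}) (x y v : V) : Prop :=
  exists p, tpath E x y p /\ v \in x :: p.

Definition is_tree (V : finType) (VT : {set V}) (ET : {set {set V}}) : Prop :=
  [/\ (forall e, e \in ET -> exists a b, [/\ a != b, a \in VT, b \in VT & e = [set a; b]]),
      (forall x y, x \in VT -> y \in VT -> exists p, tpath ET x y p) &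
      (forall x p, ~ [/\ path (adjE ET) x p, uniq (x :: p), 2 <= size p
                       & adjE ET (last x p) x])].

Definition child (V : finType) (ET : {set {set V}}) (r p u : V) : Prop :=
  [/\ [set p; u] \in ET, p != u & on_path ET r u p].

Definition leaf (V : finType) (VT : {set V}) (ET : {set {set V}}) (r l : V) : Prop :=
  [/\ l \in VT, l != r & forall u, ~ child ET r l u].

Definition extended (V : finType) (VT : {set V}) (ET : {set {set V}}) (r : V) : Prop :=
  forall l, leaf VT ET r l -> forall p w, child ET r p l -> child ET r p w -> w = l.

Record tree_dec (V : finType) := TreeDec {
  ntrees : nat;
  tV : 'I_ntrees -> {set V};
  tE : 'I_ntrees -> {set {set V}};
  troot : 'I_ntrees -> V }.
Arguments tV {V} t _.
Arguments tE {V} t _.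
Arguments troot {V} t _.

Definition tleaf (V : finType) (D : tree_dec V) (i : 'I_(ntrees D)) (l : V) : Prop :=
  leaf (tV D i) (tE D i) (troot D i) l.
Arguments tleaf {V} D i l.

Definition bt_based (V : finType) (VH : {set V}) (EH : {set {set V}}) (D : tree_dec V)
  : Prop :=
  [/\ VH = \bigcup_(i < ntrees D) tV D i /\
      EH = \bigcup_(i < ntrees D) tE D i,
      (forall i, [/\ is_tree (tV D i) (tE D i), troot D i \in tV D i
                   & extended (tV D i) (tE D i) (troot D i)]),
      (forall i j, i != j -> tE D i :&: tE D j = set0),
      (forall i l, tleaf D i l -> exists j1 j2, j1 != j2 /\
                   forall j, tleaf D j l <-> (j = j1 \/ j = j2)) &
      (forall i j, i != j ->
         (forall u v, u \in tV D i :&: tV D j -> v \in tV D i :&: tV D j -> u = v) /\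
         (forall v, v \in tV D i :&: tV D j -> tleaf D i v /\ tleaf D j v))].

Definition adjacent (V : finType) (D : tree_dec V) (i j : 'I_(ntrees D)) : Prop :=
  i != j /\ exists l, tleaf D i l /\ tleaf D j l.
Arguments adjacent {V} D i j.

Definition VP (V : finType) (D : tree_dec V) (i j : 'I_(ntrees D)) : {set V} :=
  [set v | `[< on_path (tE D i :|: tE D j) (troot D i) (troot D j) v >]].
Arguments VP {V} D i j.

(* literals: (v, true) is the positive literal v, (v, false) its negation *)
Definition clause (V : finType) (D : tree_dec V) (i j : 'I_(ntrees D)) : {set V * bool} :=
  [set (v, true) | v in VP D i j].
Arguments clause {V} D i j.

Definition lit_set (V : finType) (S : {set V * bool}) : Prop :=
  forall v, ~~ (((v, true) \in S) && ((v, false) \in S)).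

Definition Vars (V : finType) (S : {set V * bool}) : {set V} :=
  [set v | ((v, true) \in S) || ((v, false) \in S)].

Definition SAT (V : finType) (VH : {set V}) (D : tree_dec V) : {set {set V * bool}} :=
  [set S | `[< [/\ lit_set S, Vars S = VH &
      forall i j, adjacent D i j -> exists x, x \in S /\ x \in clause D i j] >]].

Definition Fix (V : finType) (D : tree_dec V) (S : {set V * bool}) : {set V * bool} :=
  [set x | `[< exists i j, adjacent D i j /\ exists l,
      [/\ x = (l, true), tleaf D i l, tleaf D j l, x \in S &
          forall v, v \in VP D i j -> v != l -> (v, false) \in S] >]].

From HB Require Import structures.
From mathcomp Require Import all_boot all_algebra.
From mathcomp Require Import boolp.
Import GRing.Theory Num.Theory.

Set Implicit Arguments.
Unset Strict Implicit.
Unset Printing Implicit Defensive.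

(* Start from an arbitrary total assignment s, i.e. one of 2^|V(H)| equally
   likely ones, and repair it: for every clause C_{i,j} falsified by s, make the
   shared leaf l_{i,j} true.  Since l_{i,j} is the only leaf on the path P_{i,j},
   the repaired assignment S satisfies phi_H, and it determines s up to the
   values of the fixed literals of S, each of which can be either true or the
   result of a repair.  So the fibre over S has 2^|Fix(S)| elements, whence
   sum_S 2^|Fix(S)| = 2^|V(H)| = 2^|S|. *)

Section Trees.
Variable V : finType.
Implicit Types (VT VB W : {set V}) (ET EB : {set {set V}}).

Lemma tree_edge_sub VT ET e a : is_tree VT ET -> e \in ET -> a \in e -> a \in VT.
Proof.
by case=> He _ _ /He [c [d [_ hc hd ->]]]; rewrite !inE => /orP[]/eqP->.
Qed.

Lemma tree_adj_sub VT ET a b : is_tree VT ET -> adjE ET a b -> b \in VT.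
Proof. by move=> T /andP[_ e]; apply: (tree_edge_sub T e); rewrite set22. Qed.

Lemma path_sub (E : {set {set V}}) W x p :
  (forall a b, adjE E a b -> b \in W) -> x \in W ->
  path (adjE E) x p -> {subset x :: p <= W}.
Proof.
move=> hE; elim: p x => [|y p IH] x hx /=.
  by move=> _ z; rewrite inE => /eqP->.
case/andP=> hxy hp z; rewrite inE => /orP[/eqP->//|].
exact: (IH y (hE _ _ hxy) hp).
Qed.

(* A non-root leaf is joined to the root by a path ending with the edge from its
   parent; a second neighbour would either be a child or close a cycle. *)
Lemma leaf_adj_uniq VT ET r v y1 y2 : is_tree VT ET -> r \in VT ->
  leaf VT ET r v -> adjE ET v y1 -> adjE ET v y2 -> y1 = y2.
Proof.
move=> T hr [hv hvr nch] a1 a2; apply/eqP/negP => /negP h12.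
case: (T) => _ Tc Tac.
have [P [hP [uP lP]]] := Tc r v hr hv.
case/lastP: P hP uP lP => [|P' z] hP uP lP.
  by move: lP => /= /eqP; rewrite eq_sym (negbTE hvr).
rewrite last_rcons in lP; subst z.
have [y [hyx ay]] : exists y, y != last r P' /\ adjE ET v y.
  case: (eqVneq y1 (last r P')) => [e|ne]; last by exists y1.
  by exists y2; split=> //; rewrite -e eq_sym.
move: (ay) => /andP[nvy ey].
case: (boolP (y \in r :: P')) => yin; last first.
  apply: (nch y); split=> //.
  exists (rcons (rcons P' v) y); split; last by rewrite !(inE, mem_rcons, eqxx, orbT).
  split; first by rewrite rcons_path hP last_rcons.
  split; last by rewrite last_rcons.
  rewrite -rcons_cons rcons_uniq uP andbT -rcons_cons mem_rcons inE negb_or.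
  by rewrite eq_sym nvy.
rewrite inE in yin; case/orP: yin => [/eqP eyr | yP'].
  apply: (Tac r (rcons P' v)); split=> //; last by rewrite last_rcons -eyr.
  rewrite size_rcons; case: P' {hP uP} hyx => //=.
  by rewrite eyr eqxx.
move: hP uP hyx; case/splitPr: yP' => P1 P2 hP uP hyx.
apply: (Tac y (rcons P2 v)); split.
- by move: hP; rewrite rcons_cat cat_path /= => /andP[_ /andP[]].
- by move: uP; rewrite rcons_cat -cat_cons cat_uniq => /and3P[].
- rewrite size_rcons; case: P2 {hP uP} hyx => //=.
  by rewrite last_cat /= eqxx.
- by rewrite last_rcons.
Qed.

(* Both neighbours of v on the path are reached through edges of ET, since the
   edges of the other tree avoid v. *)
Lemma leaf_on_path_end VT ET VB EB r v x p : is_tree VT ET -> is_tree VB EB ->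
  r \in VT -> leaf VT ET r v -> v \notin VB ->
  path (adjE (ET :|: EB)) x p -> uniq (x :: p) -> v \in x :: p ->
  v = x \/ v = last x p.
Proof.
move=> T TB hr lv nvB hp up vin.
case: (eqVneq v x) => [|vx]; [by left | right].
apply/eqP/negP => /negP vl.
have vp : v \in p by move: vin; rewrite inE (negbTE vx).
move: hp up vl; case/splitPr: vp => p1 p2 hp up vl.
case: p2 hp up vl => [|w p3] hp up vl.
  by move: vl; rewrite last_cat /= eqxx.
move: hp; rewrite cat_path /= => /and3P[_ auv /andP[avw _]].
move: up; rewrite -cat_cons cat_uniq => /and3P[_ hd _].
have uw : last x p1 != w.
  apply/eqP=> e; move: hd; rewrite /= negb_or => /andP[_]; rewrite negb_or => /andP[].
  by rewrite -e mem_last.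
have inET a b : adjE (ET :|: EB) a b -> v \in [set a; b] -> adjE ET a b.
  case/andP=> ab; rewrite inE => /orP[e|e] vab; first by rewrite /adjE ab.
  by rewrite (tree_edge_sub TB e vab) in nvB.
have a1 : adjE ET v (last x p1).
  have := inET _ _ auv; rewrite set22 => /(_ isT) /andP[h1 h2].
  by rewrite /adjE eq_sym h1 setUC.
have a2 : adjE ET v w := inET _ _ avw (set21 _ _).
by move: uw; rewrite (leaf_adj_uniq T hr lv a1 a2) eqxx.
Qed.

End Trees.

Section BinaryTreeBased.
Variables (V : finType) (VH : {set V}) (EH : {set {set V}}) (D : tree_dec V).
Hypothesis HD : bt_based VH EH D.

Lemma bt_tree i : is_tree (tV D i) (tE D i) /\ troot D i \in tV D i.
Proof. by case: HD => _ /(_ i) []. Qed.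

Lemma bt_inter i j : i != j ->
  (forall u v, u \in tV D i :&: tV D j -> v \in tV D i :&: tV D j -> u = v) /\
  (forall v, v \in tV D i :&: tV D j -> tleaf D i v /\ tleaf D j v).
Proof. by case: HD => _ _ _ _; apply. Qed.

Lemma VP_sub i j v : v \in VP D i j -> v \in tV D i :|: tV D j.
Proof.
rewrite inE => /asboolP [p [[hp _] vin]].
have [Ti ri] := bt_tree i; have [Tj _] := bt_tree j.
have adj_sub a b : adjE (tE D i :|: tE D j) a b -> b \in tV D i :|: tV D j.
  case/andP=> ab; rewrite inE => /orP[] e.
    by rewrite inE (tree_adj_sub Ti (_ : adjE _ a b)) //= /adjE ab.
  by rewrite inE (tree_adj_sub Tj (_ : adjE _ a b)) ?orbT //= /adjE ab.
by apply: (path_sub adj_sub _ hp vin); rewrite inE ri.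
Qed.

Lemma VP_sub_VH i j v : v \in VP D i j -> v \in VH.
Proof.
move/VP_sub; case: HD => [[-> _]] _ _ _ _.
by rewrite inE => /orP[] h; apply/bigcupP; [exists i | exists j].
Qed.

(* P_{i,j} is the root-to-leaf path of T_i followed by the leaf-to-root path of
   T_j; they only meet at the common leaf. *)
Lemma shared_leaf_VP i j l : adjacent D i j -> tleaf D i l -> tleaf D j l ->
  l \in VP D i j.
Proof.
case=> nij _ [li _ _] [lj _ _].
have [Ti ri] := bt_tree i; have [Tj rj] := bt_tree j.
have [p1 [hp1 [u1 l1]]] := (let: And3 _ c _ := Ti in c) _ _ ri li.
have [p2 [hp2 [u2 l2]]] := (let: And3 _ c _ := Tj in c) _ _ lj rj.
have sub1 : subrel (adjE (tE D i)) (adjE (tE D i :|: tE D j)).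
  by move=> a b /andP[h1 h2]; rewrite /adjE h1 inE h2.
have sub2 : subrel (adjE (tE D j)) (adjE (tE D i :|: tE D j)).
  by move=> a b /andP[h1 h2]; rewrite /adjE h1 inE h2 orbT.
have disj : ~~ has (mem (troot D i :: p1)) p2.
  apply/hasPn => y yp2; apply/negP => yp1.
  have yi : y \in tV D i := path_sub (fun a b => tree_adj_sub Ti) ri hp1 yp1.
  have yj : y \in tV D j.
    by apply: (path_sub (fun a b => tree_adj_sub Tj) lj hp2); rewrite inE yp2 orbT.
  have ey : y = l by apply: (proj1 (bt_inter nij)); rewrite inE ?yi ?yj ?li ?lj.
  by move: u2; rewrite /= -ey yp2.
rewrite inE; apply/asboolP; exists (p1 ++ p2); split; last first.
  by rewrite -cat_cons mem_cat -l1 mem_last.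
split; first by rewrite cat_path l1 (sub_path sub1 hp1) (sub_path sub2 hp2).
split; last by rewrite last_cat l1.
by rewrite -cat_cons cat_uniq u1 disj; case/andP: u2.
Qed.

(* A leaf v <> l on P_{i,j} lies in exactly one of T_i, T_j and is a leaf of
   that tree, so it is neither an inner vertex of the path nor a root. *)
Lemma tleaf_VP_eq i j l v k : adjacent D i j -> tleaf D i l -> tleaf D j l ->
  v \in VP D i j -> tleaf D k v -> v = l.
Proof.
move=> [nij _] [li _ _] [lj _ _] vP tkv.
have [vk _ _] := tkv.
have vu := VP_sub vP.
move: vP; rewrite inE => /asboolP [p [[hp [up lp]] vin]].
have [Ti ri] := bt_tree i; have [Tj rj] := bt_tree j.
have tleaf_of m : v \in tV D m -> tleaf D m v.
  case: (eqVneq k m) => [<-//|nkm] vm.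
  by apply: (proj2 (proj2 (bt_inter nkm) v _)); rewrite inE vk vm.
apply/eqP/negP => /negP nvl.
case: (boolP (v \in tV D i)) => vi; case: (boolP (v \in tV D j)) => vj.
- by rewrite (proj1 (bt_inter nij) v l) ?eqxx ?inE ?vi ?vj ?li ?lj in nvl.
- have [_ vr _] := tleaf_of i vi.
  case: (leaf_on_path_end Ti Tj ri (tleaf_of i vi) vj hp up vin) => ev.
    by rewrite ev eqxx in vr.
  by rewrite ev lp rj in vj.
- have [_ vr _] := tleaf_of j vj.
  rewrite setUC in hp.
  case: (leaf_on_path_end Tj Ti rj (tleaf_of j vj) vi hp up vin) => ev.
    by rewrite ev ri in vi.
  by rewrite ev lp eqxx in vr.
- by move: vu; rewrite inE (negbTE vi) (negbTE vj).
Qed.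

End BinaryTreeBased.

Section Repair.
Variables (V : finType) (VH : {set V}) (D : tree_dec V).
Hypothesis VP_sub_VH : forall i j v, v \in VP D i j -> v \in VH.
Hypothesis shared_leaf_VP : forall i j l,
  adjacent D i j -> tleaf D i l -> tleaf D j l -> l \in VP D i j.
Hypothesis tleaf_VP_eq : forall i j l v k, adjacent D i j -> tleaf D i l ->
  tleaf D j l -> v \in VP D i j -> tleaf D k v -> v = l.

Definition total (S : {set V * bool}) := lit_set S /\ Vars S = VH.

Definition totals := [set S | `[< total S >]].

Definition lits_of (P : pred V) : {set V * bool} :=
  [set x | (x.1 \in VH) && (x.2 == P x.1)].

Definition falsified_leaf (s : {set V * bool}) v : bool :=
  `[< exists i j, adjacent D i j /\ [/\ tleaf D i v, tleaf D j v &
        forall u, u \in VP D i j -> (u, false) \in s] >].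

Definition repair (s : {set V * bool}) :=
  lits_of (fun v => ((v, true) \in s) || falsified_leaf s v).

Definition unfix (S F : {set V * bool}) :=
  lits_of (fun v => ((v, true) \in S) && ((v, true) \notin F)).

Lemma mem_lits_of P v b : ((v, b) \in lits_of P) = (v \in VH) && (b == P v).
Proof. by rewrite inE. Qed.

Lemma lits_of_total P : total (lits_of P).
Proof.
split; first by move=> v; rewrite !mem_lits_of; case: (P v); rewrite ?andbF.
by apply/setP => v; rewrite inE !mem_lits_of; case: (v \in VH); case: (P v).
Qed.

Lemma total_mem S v b : total S ->
  ((v, b) \in S) = (v \in VH) && (b == ((v, true) \in S)).
Proof.
case=> ls vs; have := ls v; rewrite -vs inE.
by case: b; case: ((v, true) \in S); case: ((v, false) \in S).
Qed.

Lemma total_eq S1 S2 : total S1 -> total S2 ->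
  {in VH, forall v, ((v, true) \in S1) = ((v, true) \in S2)} -> S1 = S2.
Proof.
move=> t1 t2 E; apply/setP => [[v b]]; rewrite (total_mem _ _ t1) (total_mem _ _ t2).
by case: (boolP (v \in VH)) => //= h; rewrite E.
Qed.

Lemma card_total S : total S -> #|S| = #|VH|.
Proof.
move=> t; have -> : S = (fun v => (v, (v, true) \in S)) @: VH.
  apply/setP => [[v b]]; rewrite (total_mem _ _ t); apply/idP/imsetP.
    by case/andP=> h /eqP ->; exists v.
  by case=> w hw [-> ->]; rewrite hw eqxx.
by apply: card_imset => a c [].
Qed.

Lemma card_totals : #|totals| = 2 ^ #|VH|.
Proof.
have -> : totals = (fun X : {set V} => lits_of (fun v => v \in X)) @: powerset VH.
  apply/setP => S; rewrite inE; apply/asboolP/imsetP => [t|[X _ ->]];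
    last exact: lits_of_total.
  exists [set v in VH | (v, true) \in S].
    by rewrite inE; apply/subsetP => v; rewrite inE => /andP[].
  apply: total_eq => // [|v hv]; first exact: lits_of_total.
  by rewrite mem_lits_of /= !inE hv.
rewrite card_in_imset ?card_powerset // => X Y.
rewrite !inE => /subsetP sX /subsetP sY E; apply/setP => v.
have := congr1 (fun S : {set V * bool} => (v, true) \in S) E; rewrite /= !mem_lits_of /=.
case: (boolP (v \in VH)) => /= [_|nv]; first by case: (v \in X); case: (v \in Y).
by rewrite (contraNF (sX v) nv) (contraNF (sY v) nv).
Qed.

Lemma SAT_total S : S \in SAT VH D -> total S.
Proof. by rewrite inE => /asboolP []. Qed.

Lemma FixP S x : x \in Fix D S -> exists l, x = (l, true) /\
  exists i j, adjacent D i j /\ [/\ tleaf D i l, tleaf D j l, x \in S &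
          forall v, v \in VP D i j -> v != l -> (v, false) \in S].
Proof.
rewrite inE => /asboolP [i [j [adj [l [-> ? ? ? ?]]]]].
by exists l; split=> //; exists i, j.
Qed.

Lemma Fix_subset S : Fix D S \subset S.
Proof. by apply/subsetP => x /FixP [l [-> [i [j [_ []]]]]]. Qed.

Lemma repair_SAT s : total s -> repair s \in SAT VH D.
Proof.
move=> ts; rewrite inE; apply/asboolP.
have [ls vs] : total (repair s) := lits_of_total _.
split=> // i j adj.
case: (boolP [exists v, (v \in VP D i j) && ((v, true) \in s)]).
  case/existsP => v /andP[vP vs'].
  exists (v, true); split; last by apply/imsetP; exists v.
  by rewrite mem_lits_of (VP_sub_VH vP) vs'.
rewrite negb_exists => /forallP hn.
have [_ [l [tli tlj]]] := adj.
exists (l, true); split; last by apply/imsetP; exists l => //; apply: shared_leaf_VP.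
have lP := shared_leaf_VP adj tli tlj.
rewrite mem_lits_of (VP_sub_VH lP) /=; apply/orP; right; apply/asboolP.
exists i, j; split=> //; split=> // u uP.
rewrite (total_mem _ _ ts) (VP_sub_VH uP) /=.
by have := hn u; rewrite uP /= => /negbTE ->.
Qed.

Lemma mem_repair s v : v \in VH ->
  ((v, true) \in repair s) = ((v, true) \in s) || falsified_leaf s v.
Proof. by move=> hv; rewrite mem_lits_of hv. Qed.

Lemma repair_diff_Fix s : total s -> repair s :\: s \subset Fix D (repair s).
Proof.
move=> ts; have tS : total (repair s) := lits_of_total _.
apply/subsetP => [[v b]]; rewrite inE => /andP[nvs vS].
have hv : v \in VH by move: vS; rewrite (total_mem _ _ tS) => /andP[].
case: b nvs vS => nvs vS; last first.
  move: vS nvs; rewrite (total_mem _ _ tS) (total_mem _ _ ts) hv mem_repair //=.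
  by case: ((v, true) \in s).
have /asboolP [i [j [adj [tli tlj hall]]]] : falsified_leaf s v.
  by move: vS; rewrite mem_repair // (negbTE nvs).
rewrite inE; apply/asboolP; exists i, j; split=> //; exists v; split=> //.
move=> u uP nuv; have hu := VP_sub_VH uP.
rewrite (total_mem _ _ tS) hu /= mem_repair //.
have := hall u uP; rewrite (total_mem _ _ ts) hu /= => /eqP <- /=.
apply/negP => /asboolP [i' [j' [_ [tli' _ _]]]].
by move: nuv; rewrite (tleaf_VP_eq adj tli tlj uP tli') eqxx.
Qed.

Lemma unfix_repair s : total s -> unfix (repair s) (repair s :\: s) = s.
Proof.
move=> ts; apply: total_eq => // [|v hv]; first exact: lits_of_total.
rewrite mem_lits_of hv /= in_setD mem_repair // negb_and negbK.
by case: ((v, true) \in s); case: (falsified_leaf s v).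
Qed.

(* A clause whose literals are all negative after unfixing must have had its
   only true literal at a fixed leaf, which by tleaf_VP_eq is its own shared
   leaf; so repairing restores exactly the unfixed literals. *)
Lemma repair_unfix S (F : {set V * bool}) :
  S \in SAT VH D -> F \subset Fix D S -> repair (unfix S F) = S.
Proof.
move=> SS /subsetP sF; have tS := SAT_total SS.
have satS : forall i j, adjacent D i j -> exists x, x \in S /\ x \in clause D i j.
  by move: SS; rewrite inE => /asboolP [].
apply: total_eq => //; first exact: lits_of_total.
move=> v hv; rewrite mem_repair ?mem_lits_of ?hv //=.
case: (boolP ((v, true) \in S)) => vS /=; last first.
  apply/negP => /asboolP [i [j [adj [tli tlj hall]]]].
  have [x [xS /imsetP [u uP ex]]] := satS i j adj; subst x.
  have := hall u uP; rewrite mem_lits_of (VP_sub_VH uP) /= xS /=.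
  case uF: ((u, true) \in F) => // _.
  have [l [[el] [i' [j' [_ [tli' _ _ _]]]]]] := FixP (sF _ uF); subst l.
  by move: vS; rewrite -(tleaf_VP_eq adj tli tlj uP tli') xS.
case: (boolP ((v, true) \in F)) => vF //=.
have [l [[el] [i [j [adj [tli tlj _ hall]]]]]] := FixP (sF _ vF); subst l.
apply/asboolP; exists i, j; split=> //; split=> // u uP.
rewrite mem_lits_of (VP_sub_VH uP) /=.
case: (eqVneq u v) => [->|nuv]; first by rewrite vF andbF.
by have := hall u uP nuv; rewrite (total_mem _ _ tS) (VP_sub_VH uP) /= => /eqP <-.
Qed.

Lemma repair_fibre S : S \in SAT VH D ->
  [set s in totals | repair s == S] = unfix S @: powerset (Fix D S).
Proof.
move=> SS; apply/setP => s; rewrite !inE; apply/andP/imsetP.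
  case=> /asboolP ts /eqP <-; exists (repair s :\: s); last by rewrite unfix_repair.
  by rewrite inE repair_diff_Fix.
case=> F; rewrite inE => sF ->; split; last by rewrite repair_unfix.
by apply/asboolP; exact: lits_of_total.
Qed.

Lemma unfix_inj S : S \in SAT VH D -> {in powerset (Fix D S) &, injective (unfix S)}.
Proof.
move=> SS F1 F2; rewrite !inE => /subsetP s1 /subsetP s2 E.
have unfix_sub (A B : {set V * bool}) :
    {subset A <= Fix D S} -> unfix S A = unfix S B -> {subset A <= B}.
  move=> sA EAB x xA.
  have [l [el [i [j [_ [_ _ xS _]]]]]] := FixP (sA _ xA); subst x.
  have hl : l \in VH by move: xS; rewrite (total_mem _ _ (SAT_total SS)) => /andP[].
  have := congr1 (fun T : {set V * bool} => (l, false) \in T) EAB.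
  by rewrite /= !mem_lits_of hl /= xS xA /=; case: ((l, true) \in B).
by apply/setP => x; apply/idP/idP; apply: unfix_sub.
Qed.

Lemma sum_exp2_Fix : \sum_(S in SAT VH D) 2 ^ #|Fix D S| = 2 ^ #|VH|.
Proof.
rewrite -card_totals -sum1_card; symmetry.
rewrite (partition_big repair (mem (SAT VH D))) /=; last first.
  by move=> s; rewrite inE => /asboolP; exact: repair_SAT.
apply: eq_bigr => S SS; rewrite sum1dep_card.
rewrite (_ : [set x | _] = [set s in totals | repair s == S]) // repair_fibre //.
by rewrite card_in_imset ?card_powerset //; exact: unfix_inj.
Qed.

End Repair.

Local Open Scope ring_scope.

Lemma exp_half_subn (R : numFieldType) n k : (k <= n)%N ->
  ((2%:R : R)^-1) ^+ (n - k) = (2 ^ k)%:R / (2 ^ n)%:R.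
Proof.
move=> kn; rewrite -{2}(subnK kn) expnD natrM !natrX exprVn invfM mulrCA mulfV ?mulr1 //.
by rewrite expf_neq0 // pnatr_eq0.
Qed.

Theorem proposition1 (V : finType) (VH : {set V}) (EH : {set {set V}})
  (D : tree_dec V) (HD : bt_based VH EH D) :
  \sum_(S in SAT VH D) ((2%:R : rat)^-1) ^+ #|S :\: Fix D S| = 1.
Proof.
have sum_Fix := sum_exp2_Fix (VP_sub_VH HD) (shared_leaf_VP HD) (tleaf_VP_eq HD).
rewrite (eq_bigr (fun S => (2 ^ #|Fix D S|)%:R / (2 ^ #|VH|)%:R)); last first.
  move=> S /SAT_total tS.
  rewrite cardsD (setIidPr (Fix_subset D S)) (card_total tS) exp_half_subn //.
  by rewrite -(card_total tS) subset_leq_card // Fix_subset.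
by rewrite -mulr_suml -natr_sum sum_Fix mulfV // pnatr_eq0 expn_eq0.
Qed.
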